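(* If $H(P)\ge\sum_{i=1}^N\pi_i\frac{\beta_i^2}{2}$, then $\underline\zeta=0$. Otherwise, $\underline\zeta$ equals the optimal value of the convex optimization problem $$\text{minimize}_{\theta\in\Delta}\quad -\sum_{(i,j)\in E}\theta_{ij}\log P_{ij}+R(\theta)-2\sqrt{R(\theta)}\sqrt{H(\theta)},\qquad R(\theta):=\sum_{i=1}^N\overline\theta_i\frac{\beta_i^2}{2};$$ in particular, the objective of this problem is a convex function on the convex set $\Delta$.
   Context: $V=\{1,\dots,N\}$; $P$ row-stochastic irreducible aperiodic with stationary distribution $\pi>0$; $E=\{(i,j):P_{ij}>0\}$; $\beta\in\mathbb R^N$. $\Delta=\{\theta\in\mathbb R^{N\times N}:\theta_{ij}\ge0,\sum_{i,j}\theta_{ij}=1,\sum_j\theta_{ij}=\sum_j\theta_{ji}\forall i,\theta_{ij}=0\text{ if }(i,j)\notin E\}$, $\overline\theta=\theta\mathbf1$. $H(\theta)=-\sum\theta_{ij}\log(\theta_{ij}/\overline\theta_i)$, $D(\theta\|P)=\sum\theta_{ij}\log(\theta_{ij}/(\overline\theta_iP_{ij}))$ ($0\log0=0$). $H(P):=-\sum_{i,j}\pi_iP_{ij}\log P_{ij}$ (i.e., $H$ evaluated at $\theta_{ij}=\pi_iP_{ij}$). $J_\theta(\xi)=\sum_{i:\overline\theta_i>0}\xi_i^2/(2\overline\theta_i)$ if $\xi_i=0$ whenever $\overline\theta_i=0$, else $+\infty$. $\underline\zeta$ is the infimum of $D(\theta\|P)+\sum_{i:\overline\theta_i>0}\overline\theta_i(\beta_i-\xi_i/\overline\theta_i)^2/2$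 over $\theta\in\Delta$, $\xi\in\mathbb R^N$ subject to $H(\theta)\ge J_\theta(\xi)$. *)

(* classical reals. Indices of V = {1..N} are represented as
   nat indices 0..N-1; vectors/matrices are functions nat -> R / nat -> nat -> R,
   and only their entries with indices < N are ever used. *)
From Stdlib Require Import Reals Lra Lia Arith.
Open Scope R_scope.

Fixpoint sumR (n : nat) (f : nat -> R) : R :=
  match n with O => 0 | S k => sumR k f + f k end.

Definition xlog (x y : R) : R :=
  if Rlt_dec 0 x then x * ln (x / y) else 0.

Fixpoint mpow (N : nat) (P : nat -> nat -> R) (n : nat) (i j : nat) : R :=
  match n with
  | O => if Nat.eq_dec i j then 1 else 0
  | S k => sumR N (fun l => mpow N P k i l * P l j)
  end.

Definition row_stochastic (N : nat) (P : nat -> nat -> R) : Prop :=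
  (forall i j, (i < N)%nat -> (j < N)%nat -> 0 <= P i j) /\
  (forall i, (i < N)%nat -> sumR N (fun j => P i j) = 1).

Definition irreducible (N : nat) (P : nat -> nat -> R) : Prop :=
  forall i j, (i < N)%nat -> (j < N)%nat -> exists n, 0 < mpow N P n i j.

(* every state has period 1: gcd { n >= 1 : (P^n)_{ii} > 0 } = 1 *)
Definition aperiodic (N : nat) (P : nat -> nat -> R) : Prop :=
  forall i, (i < N)%nat ->
    forall d : nat,
      (forall n, (0 < n)%nat -> 0 < mpow N P n i i -> Nat.divide d n) ->
      d = 1%nat.

Definition stationary (N : nat) (P : nat -> nat -> R) (pi : nat -> R) : Prop :=
  (forall i, (i < N)%nat -> 0 < pi i) /\
  sumR N pi = 1 /\
  (forall j, (j < N)%nat -> sumR N (fun i => pi i * P i j) = pi j).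

Definition tbar (N : nat) (theta : nat -> nat -> R) (i : nat) : R :=
  sumR N (fun j => theta i j).

Definition inDelta (N : nat) (P : nat -> nat -> R) (theta : nat -> nat -> R) : Prop :=
  (forall i j, (i < N)%nat -> (j < N)%nat -> 0 <= theta i j) /\
  sumR N (fun i => sumR N (fun j => theta i j)) = 1 /\
  (forall i, (i < N)%nat ->
     sumR N (fun j => theta i j) = sumR N (fun j => theta j i)) /\
  (forall i j, (i < N)%nat -> (j < N)%nat -> ~ (0 < P i j) -> theta i j = 0).

Definition Hent (N : nat) (theta : nat -> nat -> R) : R :=
  - sumR N (fun i => sumR N (fun j => xlog (theta i j) (tbar N theta i))).

Definition Dkl (N : nat) (theta P : nat -> nat -> R) : R :=
  sumR N (fun i => sumR N (fun j => xlog (theta i j) (tbar N theta i * P i j))).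

Definition HP (N : nat) (P : nat -> nat -> R) (pi : nat -> R) : R :=
  Hent N (fun i j => pi i * P i j).

(* The constraint H(theta) >= J_theta(xi), where J_theta(xi) = +oo unless
   xi_i = 0 whenever theta-bar_i = 0. *)
Definition J_constraint (N : nat) (theta : nat -> nat -> R) (xi : nat -> R) : Prop :=
  (forall i, (i < N)%nat -> tbar N theta i = 0 -> xi i = 0) /\
  sumR N (fun i => if Rlt_dec 0 (tbar N theta i)
                   then (xi i) ^ 2 / (2 * tbar N theta i) else 0)
  <= Hent N theta.

Definition zeta_obj (N : nat) (P : nat -> nat -> R) (beta : nat -> R)
  (theta : nat -> nat -> R) (xi : nat -> R) : R :=
  Dkl N theta P +
  sumR N (fun i => if Rlt_dec 0 (tbar N theta i)
                   then tbar N theta i * (beta i - xi i / tbar N theta i) ^ 2 / 2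
                   else 0).

Definition zeta_values (N : nat) (P : nat -> nat -> R) (beta : nat -> R) (z : R) : Prop :=
  exists theta xi, inDelta N P theta /\ J_constraint N theta xi /\
                   z = zeta_obj N P beta theta xi.

Definition is_inf (S : R -> Prop) (m : R) : Prop :=
  (forall x, S x -> m <= x) /\
  (forall m', (forall x, S x -> m' <= x) -> m' <= m).

Definition Rfun (N : nat) (beta : nat -> R) (theta : nat -> nat -> R) : R :=
  sumR N (fun i => tbar N theta i * (beta i) ^ 2 / 2).

Definition conv_obj (N : nat) (P : nat -> nat -> R) (beta : nat -> R)
  (theta : nat -> nat -> R) : R :=
  - sumR N (fun i => sumR N (fun j =>
        if Rlt_dec 0 (P i j) then theta i j * ln (P i j) else 0))
  + Rfun N beta theta
  - 2 * sqrt (Rfun N beta theta) * sqrt (Hent N theta).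

Definition conv_values (N : nat) (P : nat -> nat -> R) (beta : nat -> R) (z : R) : Prop :=
  exists theta, inDelta N P theta /\ z = conv_obj N P beta theta.

Definition mix (t : R) (th1 th2 : nat -> nat -> R) : nat -> nat -> R :=
  fun i j => t * th1 i j + (1 - t) * th2 i j.

(* Write R, H for R(theta), H(theta). The drift part of zeta equals R - <beta, xi> + J(xi), and
   AM-GM gives <beta, xi> <= 2 sqrt (R J); under J <= H the optimal drift is xi = c theta-bar beta
   with c = min (1, sqrt (H / R)). Minimizing over xi thus leaves D(theta || P) + (sqrt R - sqrt H)^2
   when H <= R, which is exactly the convex objective since D = - H - sum theta log P, and leaves
   D(theta || P) when H > R. At the stationary flow pi_i P_ij we have D = 0, so if H(P) >= R there
   the infimum is 0. Otherwise a point with H > R may be replaced by the point where H = R on the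
   segment towards the stationary flow: H - R is concave along it and D is convex and vanishes at
   the flow, so D does not increase. *)

From Stdlib Require Import Reals Lra Lia FunctionalExtensionality Classical.
Open Scope R_scope.

Lemma sumR_ext n f g : (forall i, (i < n)%nat -> f i = g i) -> sumR n f = sumR n g.
Proof.
  induction n as [|n IH]; intros H; simpl; [reflexivity|].
  rewrite IH by (intros; apply H; lia). rewrite H by lia. reflexivity.
Qed.

Lemma sumR_lin n (a b : R) f g :
  sumR n (fun i => a * f i + b * g i) = a * sumR n f + b * sumR n g.
Proof. induction n as [|n IH]; simpl; [ring|]. rewrite IH. ring. Qed.

Lemma sumR_plus n f g : sumR n (fun i => f i + g i) = sumR n f + sumR n g.
Proof. induction n as [|n IH]; simpl; [ring|]. rewrite IH. ring. Qed.

Lemma sumR_sub n f g : sumR n (fun i => f i - g i) = sumR n f - sumR n g.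
Proof. induction n as [|n IH]; simpl; [ring|]. rewrite IH. ring. Qed.

Lemma sumR_scal n (a : R) f : sumR n (fun i => a * f i) = a * sumR n f.
Proof. induction n as [|n IH]; simpl; [ring|]. rewrite IH. ring. Qed.

Lemma sumR_zero n : sumR n (fun _ => 0) = 0.
Proof. induction n as [|n IH]; simpl; [ring|]. rewrite IH. ring. Qed.

Lemma sumR_le n f g : (forall i, (i < n)%nat -> f i <= g i) -> sumR n f <= sumR n g.
Proof.
  induction n as [|n IH]; intros H; simpl; [lra|].
  apply Rplus_le_compat; [apply IH; intros; apply H|apply H]; lia.
Qed.

Lemma sumR_nonneg n f : (forall i, (i < n)%nat -> 0 <= f i) -> 0 <= sumR n f.
Proof. intros H. rewrite <- (sumR_zero n). apply sumR_le. exact H. Qed.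

Lemma sumR_ge_term n f k :
  (forall i, (i < n)%nat -> 0 <= f i) -> (k < n)%nat -> f k <= sumR n f.
Proof.
  induction n as [|n IH]; intros H Hk; simpl; [lia|].
  assert (Hs : 0 <= sumR n f) by (apply sumR_nonneg; intros; apply H; lia).
  destruct (Nat.eq_dec k n) as [->|Hne]; [lra|].
  assert (f k <= sumR n f) by (apply IH; [intros; apply H|]; lia).
  assert (0 <= f n) by (apply H; lia). lra.
Qed.

Lemma sumR2_lin n a b f g :
  sumR n (fun i => sumR n (fun j => a * f i j + b * g i j)) =
  a * sumR n (fun i => sumR n (fun j => f i j)) + b * sumR n (fun i => sumR n (fun j => g i j)).
Proof. rewrite <- sumR_lin. apply sumR_ext. intros. apply sumR_lin. Qed.

Lemma sumR2_le n f g : (forall i j, (i < n)%nat -> (j < n)%nat -> f i j <= g i j) ->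
  sumR n (fun i => sumR n (fun j => f i j)) <= sumR n (fun i => sumR n (fun j => g i j)).
Proof. intros H. apply sumR_le. intros. apply sumR_le. auto. Qed.

Lemma ln_le_sub1 y : 0 < y -> ln y <= y - 1.
Proof. intros Hy. pose proof (exp_ineq1_le (ln y)) as H. rewrite exp_ln in H by lra. lra. Qed.

Lemma xlog_pos x y : 0 < x -> xlog x y = x * ln (x / y).
Proof. intros H. unfold xlog. destruct (Rlt_dec 0 x); [reflexivity|lra]. Qed.

Lemma xlog_npos x y : ~ 0 < x -> xlog x y = 0.
Proof. intros H. unfold xlog. destruct (Rlt_dec 0 x); [lra|reflexivity]. Qed.

Lemma xlog_self x : xlog x x = 0.
Proof.
  unfold xlog. destruct (Rlt_dec 0 x); [|reflexivity].
  replace (x / x) with 1 by (field; lra). rewrite ln_1. ring.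
Qed.

Lemma xlog_le0 x y : 0 <= x -> x <= y -> xlog x y <= 0.
Proof.
  intros Hx Hxy. destruct (Rlt_dec 0 x) as [Hx'|Hx']; [|rewrite xlog_npos; lra].
  rewrite xlog_pos by lra.
  assert (ln (x / y) <= 0).
  { assert (x / y <= 1) by (apply Rmult_le_reg_r with y; [lra|]; field_simplify; lra).
    pose proof (ln_le_sub1 (x / y) ltac:(apply Rdiv_lt_0_compat; lra)). lra. }
  nra.
Qed.

Lemma xlog_scale c x y : 0 <= c -> xlog (c * x) (c * y) = c * xlog x y.
Proof.
  intros Hc. destruct (Req_dec c 0) as [->|Hc0].
  { rewrite !Rmult_0_l. apply xlog_npos. lra. }
  destruct (Rlt_dec 0 x) as [Hx|Hx].
  - rewrite !xlog_pos by nra. destruct (Req_dec y 0) as [->|Hy].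
    + rewrite Rmult_0_r. unfold Rdiv. rewrite !Rinv_0, !Rmult_0_r. ring.
    + replace (c * x / (c * y)) with (x / y) by (field; lra). ring.
  - rewrite !xlog_npos by nra. ring.
Qed.

(* Termwise form of the log-sum inequality, from [ln z <= z - 1]. *)
Lemma xlog_tangent a b A B : 0 <= a -> 0 <= b -> (0 < a -> 0 < b) -> 0 < A -> 0 < B ->
  a * ln (A / B) - xlog a b <= A * b / B - a.
Proof.
  intros Ha Hb Hab HA HB. destruct (Rlt_dec 0 a) as [Ha'|Ha'].
  - rewrite xlog_pos by lra. specialize (Hab Ha').
    assert (Hz : 0 < A * b / (B * a)) by (apply Rdiv_lt_0_compat; nra).
    replace (a * ln (A / B) - a * ln (a / b)) with (a * ln (A * b / (B * a))).
    + apply Rle_trans with (a * (A * b / (B * a) - 1)).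
      * apply Rmult_le_compat_l; [lra|]. apply ln_le_sub1. exact Hz.
      * right. field. lra.
    + replace (A * b / (B * a)) with ((A / B) * / (a / b)) by (field; lra).
      rewrite ln_mult, ln_Rinv by (try apply Rinv_0_lt_compat; apply Rdiv_lt_0_compat; lra).
      ring.
  - rewrite xlog_npos by lra. replace a with 0 by lra.
    assert (0 <= A * b / B) by (apply Rmult_le_pos; [nra|left; apply Rinv_0_lt_compat; lra]).
    lra.
Qed.

Lemma xlog_sum_le n a b :
  (forall i, (i < n)%nat -> 0 <= a i /\ 0 <= b i /\ (0 < a i -> 0 < b i)) ->
  0 < sumR n a -> 0 < sumR n b ->
  xlog (sumR n a) (sumR n b) <= sumR n (fun i => xlog (a i) (b i)).
Proof.
  intros H HA HB. set (A := sumR n a) in *. set (B := sumR n b) in *.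
  assert (Hsum : sumR n (fun i => ln (A / B) * a i + (-1) * xlog (a i) (b i))
                 <= sumR n (fun i => (A / B) * b i + (-1) * a i)).
  { apply sumR_le. intros i Hi. destruct (H i Hi) as (Ha & Hb & Hab).
    pose proof (xlog_tangent (a i) (b i) A B Ha Hb Hab HA HB).
    replace (A / B * b i) with (A * b i / B) by (field; lra). lra. }
  rewrite !sumR_lin in Hsum. fold A B in Hsum.
  rewrite xlog_pos by lra. replace (A / B * B) with A in Hsum by (field; lra). lra.
Qed.

Lemma xlog_add_le a1 a2 b1 b2 : 0 <= a1 -> 0 <= a2 -> 0 <= b1 -> 0 <= b2 ->
  (0 < a1 -> 0 < b1) -> (0 < a2 -> 0 < b2) ->
  xlog (a1 + a2) (b1 + b2) <= xlog a1 b1 + xlog a2 b2.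
Proof.
  intros Ha1 Ha2 Hb1 Hb2 H1 H2.
  set (a := fun i : nat => match i with O => a1 | _ => a2 end).
  set (b := fun i : nat => match i with O => b1 | _ => b2 end).
  destruct (Rlt_dec 0 (a1 + a2)) as [Hpos|Hz].
  - assert (Hb : 0 < b1 + b2).
    { destruct (Rlt_dec 0 a1); [specialize (H1 r)|specialize (H2 ltac:(lra))]; lra. }
    pose proof (xlog_sum_le 2 a b) as Hls. simpl in Hls. rewrite !Rplus_0_l in Hls.
    apply Hls; [|lra|lra]. intros [|[|i]] Hi; simpl; try lia; auto.
  - replace a1 with 0 by lra. replace a2 with 0 by lra.
    rewrite !xlog_npos by lra. lra.
Qed.

Lemma xlog_convex t x1 y1 x2 y2 : 0 <= t <= 1 ->
  0 <= x1 -> 0 <= y1 -> 0 <= x2 -> 0 <= y2 -> (0 < x1 -> 0 < y1) -> (0 < x2 -> 0 < y2) ->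
  xlog (t * x1 + (1 - t) * x2) (t * y1 + (1 - t) * y2) <= t * xlog x1 y1 + (1 - t) * xlog x2 y2.
Proof.
  intros Ht H1 H2 H3 H4 H5 H6.
  rewrite <- (xlog_scale t x1 y1), <- (xlog_scale (1 - t) x2 y2) by lra.
  apply xlog_add_le; nra.
Qed.

Definition cross_logP (N : nat) (P theta : nat -> nat -> R) : R :=
  sumR N (fun i => sumR N (fun j =>
    if Rlt_dec 0 (P i j) then theta i j * ln (P i j) else 0)).

Section Delta.
Variables (N : nat) (P : nat -> nat -> R).

Lemma tbar_ge_entry th i j : inDelta N P th -> (i < N)%nat -> (j < N)%nat ->
  th i j <= tbar N th i.
Proof. intros (Hnn & _) Hi Hj. apply (sumR_ge_term N (fun j => th i j)); auto. Qed.

Lemma tbar_nonneg th i : inDelta N P th -> (i < N)%nat -> 0 <= tbar N th i.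
Proof. intros (Hnn & _) Hi. apply sumR_nonneg. auto. Qed.

Lemma inDelta_entry_le1 th i j : inDelta N P th -> (i < N)%nat -> (j < N)%nat -> th i j <= 1.
Proof.
  intros HD Hi Hj. apply Rle_trans with (tbar N th i); [apply tbar_ge_entry; auto|].
  destruct HD as (Hnn & Hsum & _). rewrite <- Hsum.
  apply (sumR_ge_term N (fun i => tbar N th i)); auto.
  intros k Hk. apply sumR_nonneg. auto.
Qed.

Lemma inDelta_support th i j : inDelta N P th -> (i < N)%nat -> (j < N)%nat ->
  0 < th i j -> 0 < tbar N th i /\ 0 < P i j.
Proof.
  intros HD Hi Hj Hpos. split.
  - pose proof (tbar_ge_entry th i j HD Hi Hj). lra.
  - destruct (Rlt_dec 0 (P i j)) as [|HP]; auto.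
    destruct HD as (_ & _ & _ & Hsupp). rewrite Hsupp in Hpos; auto. lra.
Qed.

Lemma Hent_nonneg th : inDelta N P th -> 0 <= Hent N th.
Proof.
  intros HD. unfold Hent. rewrite <- Ropp_0. apply Ropp_le_contravar.
  rewrite <- (sumR_zero N). apply sumR_le. intros i Hi.
  rewrite <- (sumR_zero N). apply sumR_le. intros j Hj.
  apply xlog_le0; [destruct HD as (Hnn & _); auto|apply tbar_ge_entry; auto].
Qed.

Lemma Dkl_nonneg th : row_stochastic N P -> inDelta N P th -> 0 <= Dkl N th P.
Proof.
  intros [HPnn HProw] HD. apply sumR_nonneg. intros i Hi.
  destruct (Rlt_dec 0 (tbar N th i)) as [Ht|Ht].
  - rewrite <- (xlog_self (tbar N th i)).
    replace (tbar N th i) with (sumR N (fun j => tbar N th i * P i j)) at 2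
      by (rewrite sumR_scal, HProw by auto; ring).
    apply xlog_sum_le; [|exact Ht|rewrite sumR_scal, HProw by auto; lra].
    intros j Hj. repeat split; [apply (proj1 HD); auto|apply Rmult_le_pos; auto; lra|].
    intros Hp. destruct (inDelta_support th i j HD Hi Hj Hp).
    apply Rmult_lt_0_compat; auto.
  - rewrite <- (sumR_zero N). right. apply sumR_ext. intros j Hj. symmetry. apply xlog_npos.
    pose proof (tbar_ge_entry th i j HD Hi Hj). lra.
Qed.

Lemma Dkl_eq th : inDelta N P th -> Dkl N th P = - Hent N th - cross_logP N P th.
Proof.
  intros HD. unfold Dkl, Hent, cross_logP. rewrite Ropp_involutive, <- sumR_sub.
  apply sumR_ext. intros i Hi. rewrite <- sumR_sub. apply sumR_ext. intros j Hj.
  destruct (Rlt_dec 0 (th i j)) as [Hp|Hp].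
  - destruct (inDelta_support th i j HD Hi Hj Hp) as [Ht HP].
    rewrite !xlog_pos by auto. destruct (Rlt_dec 0 (P i j)); [|lra].
    replace (th i j / (tbar N th i * P i j)) with ((th i j / tbar N th i) * / P i j)
      by (field; lra).
    rewrite ln_mult, ln_Rinv by (try apply Rinv_0_lt_compat; try apply Rdiv_lt_0_compat; auto).
    ring.
  - rewrite !xlog_npos by auto.
    replace (th i j) with 0 by (destruct HD as (Hnn & _); specialize (Hnn i j Hi Hj); lra).
    destruct (Rlt_dec 0 (P i j)); ring.
Qed.

Lemma tbar_mix t a b i : tbar N (mix t a b) i = t * tbar N a i + (1 - t) * tbar N b i.
Proof. apply sumR_lin. Qed.

Lemma inDelta_affine t a b : (forall i j, (i < N)%nat -> (j < N)%nat -> 0 <= mix t a b i j) ->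
  inDelta N P a -> inDelta N P b -> inDelta N P (mix t a b).
Proof.
  intros Hnn (_ & A2 & A3 & A4) (_ & B2 & B3 & B4). split; [exact Hnn|]. unfold mix.
  split; [|split].
  - rewrite <- (sumR_ext N (fun i => t * tbar N a i + (1 - t) * tbar N b i))
      by (intros; symmetry; apply sumR_lin).
    rewrite sumR_lin. unfold tbar. rewrite A2, B2. ring.
  - intros i Hi. rewrite !sumR_lin, A3, B3 by auto. reflexivity.
  - intros i j Hi Hj HP. rewrite A4, B4 by auto. ring.
Qed.

Lemma inDelta_mix t a b : 0 <= t <= 1 -> inDelta N P a -> inDelta N P b -> inDelta N P (mix t a b).
Proof.
  intros Ht Ha Hb. apply inDelta_affine; auto. intros i j Hi Hj.
  destruct Ha as (Ha & _), Hb as (Hb & _). specialize (Ha i j Hi Hj). specialize (Hb i j Hi Hj).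
  unfold mix. nra.
Qed.

Lemma Hent_concave t a b : 0 <= t <= 1 -> inDelta N P a -> inDelta N P b ->
  t * Hent N a + (1 - t) * Hent N b <= Hent N (mix t a b).
Proof.
  intros Ht Ha Hb. unfold Hent.
  enough (sumR N (fun i => sumR N (fun j => xlog (mix t a b i j) (tbar N (mix t a b) i)))
          <= t * sumR N (fun i => sumR N (fun j => xlog (a i j) (tbar N a i)))
             + (1 - t) * sumR N (fun i => sumR N (fun j => xlog (b i j) (tbar N b i))))
    by lra.
  rewrite <- sumR2_lin. apply sumR2_le. intros i j Hi Hj. rewrite tbar_mix.
  apply xlog_convex; auto; try apply tbar_nonneg; auto;
    try (destruct Ha as (Ha' & _); apply Ha'; auto);
    try (destruct Hb as (Hb' & _); apply Hb'; auto);
    intros Hp; [apply (inDelta_support a i j)|apply (inDelta_support b i j)]; auto.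
Qed.

Lemma Dkl_convex t a b : row_stochastic N P -> 0 <= t <= 1 -> inDelta N P a -> inDelta N P b ->
  Dkl N (mix t a b) P <= t * Dkl N a P + (1 - t) * Dkl N b P.
Proof.
  intros [HPnn _] Ht Ha Hb. unfold Dkl.
  rewrite <- sumR2_lin. apply sumR2_le. intros i j Hi Hj. rewrite tbar_mix. unfold mix.
  replace ((t * tbar N a i + (1 - t) * tbar N b i) * P i j)
    with (t * (tbar N a i * P i j) + (1 - t) * (tbar N b i * P i j)) by ring.
  pose proof (tbar_nonneg a i Ha Hi). pose proof (tbar_nonneg b i Hb Hi).
  pose proof (HPnn i j Hi Hj).
  apply xlog_convex; auto; try nra;
    try (destruct Ha as (Ha' & _); apply Ha'; auto);
    try (destruct Hb as (Hb' & _); apply Hb'; auto);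
    intros Hp; [destruct (inDelta_support a i j)|destruct (inDelta_support b i j)]; auto; nra.
Qed.

Lemma cross_logP_mix t a b :
  cross_logP N P (mix t a b) = t * cross_logP N P a + (1 - t) * cross_logP N P b.
Proof.
  unfold cross_logP. rewrite <- sumR2_lin.
  apply sumR_ext; intros i _; apply sumR_ext; intros j _. unfold mix.
  destruct (Rlt_dec 0 (P i j)); ring.
Qed.

Lemma Rfun_mix beta t a b : Rfun N beta (mix t a b) = t * Rfun N beta a + (1 - t) * Rfun N beta b.
Proof. unfold Rfun. rewrite <- sumR_lin. apply sumR_ext; intros. rewrite tbar_mix. field. Qed.

Lemma Rfun_nonneg beta th : inDelta N P th -> 0 <= Rfun N beta th.
Proof.
  intros HD. apply sumR_nonneg. intros i Hi.
  pose proof (tbar_nonneg th i HD Hi). pose proof (pow2_ge_0 (beta i)). nra.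
Qed.

End Delta.

Lemma pairing_le_two_sqrt R0 J X : 0 <= R0 -> 0 <= J ->
  (forall s, 0 < s -> X <= s * R0 + / s * J) -> X <= 2 * sqrt R0 * sqrt J.
Proof.
  intros HR HJ HX.
  assert (Hsq : 0 <= 2 * sqrt R0 * sqrt J) by (pose proof (sqrt_pos R0); pose proof (sqrt_pos J); nra).
  destruct (Rle_dec X 0) as [|HXpos]; [lra|].
  destruct (Req_dec R0 0) as [HR0|HR0].
  { specialize (HX ((J + 1) / X) ltac:(apply Rdiv_lt_0_compat; lra)).
    rewrite HR0, Rmult_0_r, Rplus_0_l in HX.
    replace (/ ((J + 1) / X) * J) with (X * (J / (J + 1))) in HX by (field; lra).
    enough (X * (J / (J + 1)) < X) by lra.
    assert (J / (J + 1) < 1) by (apply Rmult_lt_reg_r with (J + 1); [lra|]; field_simplify; lra).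
    nra. }
  destruct (Req_dec J 0) as [HJ0|HJ0].
  { specialize (HX (X / (R0 + 1)) ltac:(apply Rdiv_lt_0_compat; lra)).
    rewrite HJ0, Rmult_0_r, Rplus_0_r in HX.
    replace (X / (R0 + 1) * R0) with (X * (R0 / (R0 + 1))) in HX by (field; lra).
    enough (X * (R0 / (R0 + 1)) < X) by lra.
    assert (R0 / (R0 + 1) < 1) by (apply Rmult_lt_reg_r with (R0 + 1); [lra|]; field_simplify; lra).
    nra. }
  (* the optimal [s] is [sqrt J / sqrt R0] *)
  assert (Ha : 0 < sqrt R0) by (apply sqrt_lt_R0; lra).
  assert (Hb : 0 < sqrt J) by (apply sqrt_lt_R0; lra).
  specialize (HX (sqrt J / sqrt R0) ltac:(apply Rdiv_lt_0_compat; lra)).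
  pose proof (sqrt_sqrt R0 HR) as ER. pose proof (sqrt_sqrt J HJ) as EJ.
  set (a := sqrt R0) in *. set (b := sqrt J) in *.
  rewrite <- ER, <- EJ in HX.
  replace (b / a * (a * a) + / (b / a) * (b * b)) with (2 * a * b) in HX by (field; lra).
  exact HX.
Qed.

Lemma sqrt_gap_le J H R0 : 0 <= J -> J <= H -> H <= R0 ->
  (sqrt R0 - sqrt H) ^ 2 <= R0 - 2 * sqrt R0 * sqrt J + J.
Proof.
  intros HJ HJH HHR.
  pose proof (sqrt_le_1_alt J H HJH). pose proof (sqrt_le_1_alt H R0 HHR).
  pose proof (sqrt_pos J). pose proof (sqrt_sqrt R0 ltac:(lra)). pose proof (sqrt_sqrt J HJ).
  nra.
Qed.

Definition quad_cost (N : nat) (beta : nat -> R) (th : nat -> nat -> R) (xi : nat -> R) : R :=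
  sumR N (fun i => if Rlt_dec 0 (tbar N th i)
                   then tbar N th i * (beta i - xi i / tbar N th i) ^ 2 / 2 else 0).

Definition J_value (N : nat) (th : nat -> nat -> R) (xi : nat -> R) : R :=
  sumR N (fun i => if Rlt_dec 0 (tbar N th i) then (xi i) ^ 2 / (2 * tbar N th i) else 0).

Definition pairing (N : nat) (beta : nat -> R) (th : nat -> nat -> R) (xi : nat -> R) : R :=
  sumR N (fun i => if Rlt_dec 0 (tbar N th i) then beta i * xi i else 0).

Lemma conv_obj_cross_logP N P beta th : conv_obj N P beta th =
  - cross_logP N P th + Rfun N beta th - 2 * sqrt (Rfun N beta th) * sqrt (Hent N th).
Proof. reflexivity. Qed.

Lemma conv_obj_Dkl N P beta th : inDelta N P th ->
  conv_obj N P beta th = Dkl N th P + (sqrt (Rfun N beta th) - sqrt (Hent N th)) ^ 2.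
Proof.
  intros HD. rewrite conv_obj_cross_logP, (Dkl_eq N P th HD).
  pose proof (sqrt_sqrt _ (Rfun_nonneg N P beta th HD)).
  pose proof (sqrt_sqrt _ (Hent_nonneg N P th HD)).
  nra.
Qed.

Section DriftCost.
Variables (N : nat) (P : nat -> nat -> R) (beta : nat -> R).

Lemma quad_cost_nonneg th xi : 0 <= quad_cost N beta th xi.
Proof.
  apply sumR_nonneg. intros i Hi. destruct (Rlt_dec 0 (tbar N th i)); [|lra].
  pose proof (pow2_ge_0 (beta i - xi i / tbar N th i)). nra.
Qed.

Lemma J_value_nonneg th xi : 0 <= J_value N th xi.
Proof.
  apply sumR_nonneg. intros i Hi. destruct (Rlt_dec 0 (tbar N th i)); [|lra].
  apply Rmult_le_pos; [apply pow2_ge_0|left; apply Rinv_0_lt_compat; lra].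
Qed.

Lemma quad_cost_split th xi : inDelta N P th ->
  quad_cost N beta th xi = Rfun N beta th - pairing N beta th xi + J_value N th xi.
Proof.
  intros HD. unfold quad_cost, Rfun, pairing, J_value. rewrite <- sumR_sub, <- sumR_plus.
  apply sumR_ext. intros i Hi. destruct (Rlt_dec 0 (tbar N th i)); [field; lra|].
  replace (tbar N th i) with 0 by (pose proof (tbar_nonneg N P th i HD Hi); lra). field.
Qed.

Lemma pairing_le_amgm th xi s : inDelta N P th -> 0 < s ->
  pairing N beta th xi <= s * Rfun N beta th + / s * J_value N th xi.
Proof.
  intros HD Hs. unfold Rfun, J_value. rewrite <- sumR_lin. apply sumR_le. intros i Hi.
  destruct (Rlt_dec 0 (tbar N th i)) as [Ht|Ht].
  - set (T := tbar N th i) in *.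
    assert (E : s * (T * beta i ^ 2 / 2) + / s * (xi i ^ 2 / (2 * T)) - beta i * xi i
                = (s * T * beta i - xi i) ^ 2 / (2 * s * T)) by (field; lra).
    assert (0 <= (s * T * beta i - xi i) ^ 2 / (2 * s * T))
      by (apply Rmult_le_pos; [apply pow2_ge_0|left; apply Rinv_0_lt_compat; nra]).
    lra.
  - replace (tbar N th i) with 0 by (pose proof (tbar_nonneg N P th i HD Hi); lra). lra.
Qed.

Lemma quad_cost_ge_gap th xi : inDelta N P th -> J_constraint N th xi ->
  Hent N th <= Rfun N beta th ->
  (sqrt (Rfun N beta th) - sqrt (Hent N th)) ^ 2 <= quad_cost N beta th xi.
Proof.
  intros HD [_ HJ] HHR. fold (J_value N th xi) in HJ. rewrite quad_cost_split by exact HD.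
  pose proof (pairing_le_two_sqrt _ _ (pairing N beta th xi) (Rfun_nonneg N P beta th HD)
                (J_value_nonneg th xi) (fun s Hs => pairing_le_amgm th xi s HD Hs)).
  pose proof (sqrt_gap_le _ _ _ (J_value_nonneg th xi) HJ HHR).
  lra.
Qed.

(* For each budget [J = c^2 R], the drift [xi = c * tbar * beta] minimizes [quad_cost]. *)
Lemma scaled_drift_cost th c : inDelta N P th ->
  J_value N th (fun i => c * tbar N th i * beta i) = c ^ 2 * Rfun N beta th /\
  quad_cost N beta th (fun i => c * tbar N th i * beta i) = (1 - c) ^ 2 * Rfun N beta th.
Proof.
  intros HD. unfold J_value, quad_cost, Rfun. rewrite <- !sumR_scal.
  split; apply sumR_ext; intros i Hi; destruct (Rlt_dec 0 (tbar N th i)); try (field; lra);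
    replace (tbar N th i) with 0 by (pose proof (tbar_nonneg N P th i HD Hi); lra); field.
Qed.

Lemma zeta_values_scaled_drift th c : inDelta N P th -> c ^ 2 * Rfun N beta th <= Hent N th ->
  zeta_values N P beta (Dkl N th P + (1 - c) ^ 2 * Rfun N beta th).
Proof.
  intros HD Hc. destruct (scaled_drift_cost th c HD) as [EJ Eq].
  exists th, (fun i => c * tbar N th i * beta i). split; [exact HD|]. repeat split.
  - intros i _ H0. rewrite H0. ring.
  - fold (J_value N th (fun i => c * tbar N th i * beta i)). rewrite EJ. exact Hc.
  - unfold zeta_obj. fold (quad_cost N beta th (fun i => c * tbar N th i * beta i)).
    rewrite Eq. reflexivity.
Qed.

Lemma zeta_values_le_conv_obj th : inDelta N P th ->
  exists z, zeta_values N P beta z /\ z <= conv_obj N P beta th.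
Proof.
  intros HD. rewrite conv_obj_Dkl by exact HD.
  pose proof (Rfun_nonneg N P beta th HD) as HR. pose proof (Hent_nonneg N P th HD) as HH.
  set (Rv := Rfun N beta th) in *. set (Hv := Hent N th) in *.
  destruct (Rle_dec Rv Hv) as [Hle|Hgt].
  - exists (Dkl N th P + (1 - 1) ^ 2 * Rv). split.
    + apply zeta_values_scaled_drift; auto. fold Rv Hv. lra.
    + pose proof (pow2_ge_0 (sqrt Rv - sqrt Hv)). lra.
  - (* [c = sqrt (H / R)] saturates the constraint [J <= H] *)
    assert (Ha : 0 < sqrt Rv) by (apply sqrt_lt_R0; lra).
    pose proof (sqrt_sqrt Rv HR) as ER. pose proof (sqrt_sqrt Hv HH) as EH.
    exists (Dkl N th P + (1 - sqrt Hv / sqrt Rv) ^ 2 * Rv). split.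
    + apply zeta_values_scaled_drift; auto. fold Rv Hv.
      right. set (a := sqrt Rv) in *. set (b := sqrt Hv) in *.
      rewrite <- ER, <- EH. field. lra.
    + right. f_equal. set (a := sqrt Rv) in *. set (b := sqrt Hv) in *.
      rewrite <- ER. field. lra.
Qed.

Lemma zeta_obj_ge_Dkl th xi : Dkl N th P <= zeta_obj N P beta th xi.
Proof. pose proof (quad_cost_nonneg th xi). unfold zeta_obj. fold (quad_cost N beta th xi). lra. Qed.

Lemma zeta_obj_ge_conv_obj th xi : inDelta N P th -> J_constraint N th xi ->
  Hent N th <= Rfun N beta th -> conv_obj N P beta th <= zeta_obj N P beta th xi.
Proof.
  intros HD HJ HHR. rewrite conv_obj_Dkl by exact HD. unfold zeta_obj.
  fold (quad_cost N beta th xi). pose proof (quad_cost_ge_gap th xi HD HJ HHR). lra.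
Qed.

End DriftCost.

(* Concavity along rays from [0] makes [h] continuous enough on [(0, 1]] for a supremum argument;
   nothing is assumed at [0] itself, which is why the sign change starts at [u0 > 0]. *)
Lemma star_concave_root (h : R -> R) u0 :
  (forall b l, 0 <= b <= 1 -> 0 <= l <= 1 -> l * h b + (1 - l) * h 0 <= h (l * b)) ->
  0 < u0 <= 1 -> h u0 < 0 -> 0 < h 1 -> exists s, u0 <= s <= 1 /\ h s = 0.
Proof.
  intros Hconc Hu0 Hhu0 Hh1.
  set (c := Rabs (h 0)).
  assert (Hc : 0 <= c /\ - c <= h 0) by (unfold c; split; [apply Rabs_pos|];
    pose proof (Rle_abs (- h 0)); rewrite Rabs_Ropp in *; lra).
  assert (Hchord : forall x y, 0 <= x <= y -> 0 < y <= 1 -> x * h y - (y - x) * c <= y * h x).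
  { intros x y Hx Hy.
    assert (Hl : 0 <= x / y <= 1)
      by (split; [apply Rmult_le_pos; [lra|left; apply Rinv_0_lt_compat; lra]|];
          apply Rmult_le_reg_r with y; [lra|]; field_simplify; lra).
    pose proof (Hconc y (x / y) ltac:(lra) Hl) as Hxy.
    replace (x / y * y) with x in Hxy by (field; lra).
    apply Rmult_le_compat_l with (r := y) in Hxy; [|lra].
    replace (y * (x / y * h y + (1 - x / y) * h 0)) with (x * h y + (y - x) * h 0) in Hxy
      by (field; lra).
    assert (- ((y - x) * c) <= (y - x) * h 0) by nra. lra. }
  set (E := fun t => 0 <= t <= 1 /\ h t < 0).
  destruct (completeness E) as [s [Hub Hlub]].
  { exists 1. intros t [Ht _]. lra. }
  { exists u0. split; lra. }
  assert (Hs : u0 <= s <= 1) by (split; [apply Hub; split; lra|apply Hlub; intros t [Ht _]; lra]).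
  exists s. split; [exact Hs|].
  destruct (Rtotal_order (h s) 0) as [Hneg|[Hzero|Hpos]]; [exfalso| exact Hzero |exfalso].
  - (* points just right of [s] have [h >= 0], and pull [h s] up to [0] *)
    assert (Hs1 : s < 1) by (destruct (Req_dec s 1) as [->|]; lra).
    set (d := Rmin (1 - s) (s * (- h s) / (c + 1))).
    assert (Hd0 : 0 < d) by (apply Rmin_glb_lt; [lra|apply Rdiv_lt_0_compat; nra]).
    assert (Hd1 : d <= 1 - s) by apply Rmin_l.
    assert (Hd2 : d * (c + 1) <= s * (- h s)).
    { pose proof (Rmin_r (1 - s) (s * (- h s) / (c + 1))) as Hr. fold d in Hr.
      apply Rmult_le_compat_r with (r := c + 1) in Hr; [|lra].
      replace (s * - h s / (c + 1) * (c + 1)) with (s * - h s) in Hr by (field; lra). exact Hr. }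
    assert (Hht : 0 <= h (s + d)).
    { destruct (Rle_dec 0 (h (s + d))) as [|Hn]; [assumption|].
      assert (s + d <= s) by (apply Hub; split; lra). lra. }
    pose proof (Hchord s (s + d) ltac:(lra) ltac:(lra)). nra.
  - (* points of [E] just left of [s] would have [h > 0] *)
    assert (Hex : exists t, E t /\ s * c < t * (h s + c)).
    { apply NNPP. intros Hn.
      assert (s <= s * c / (h s + c)).
      { apply Hlub. intros t Et. destruct (Rle_dec t (s * c / (h s + c))) as [|Hgt]; [assumption|].
        exfalso. apply Hn. exists t. split; [exact Et|].
        apply Rmult_lt_reg_r with (/ (h s + c)); [apply Rinv_0_lt_compat; lra|].
        replace (t * (h s + c) * / (h s + c)) with t by (field; lra). lra. }
      assert (s * c / (h s + c) < s); [|lra].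
      apply Rmult_lt_reg_r with (h s + c); [lra|]. field_simplify; nra. }
    destruct Hex as [t [[Ht Hht] Hts]].
    assert (t <= s) by (apply Hub; split; assumption).
    pose proof (Hchord t s ltac:(lra) ltac:(lra)). nra.
Qed.

Lemma sqrt_mul_concave t R1 R2 H1 H2 : 0 <= t <= 1 ->
  0 <= R1 -> 0 <= R2 -> 0 <= H1 -> 0 <= H2 ->
  t * (sqrt R1 * sqrt H1) + (1 - t) * (sqrt R2 * sqrt H2)
  <= sqrt (t * R1 + (1 - t) * R2) * sqrt (t * H1 + (1 - t) * H2).
Proof.
  intros Ht HR1 HR2 HH1 HH2.
  pose proof (sqrt_sqrt R1 HR1). pose proof (sqrt_sqrt R2 HR2).
  pose proof (sqrt_sqrt H1 HH1). pose proof (sqrt_sqrt H2 HH2).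
  set (p := sqrt R1) in *. set (q := sqrt R2) in *. set (r := sqrt H1) in *. set (u := sqrt H2) in *.
  assert (0 <= p /\ 0 <= q /\ 0 <= r /\ 0 <= u) as (Hp & Hq & Hr & Hu)
    by (repeat split; apply sqrt_pos).
  set (L := t * (p * r) + (1 - t) * (q * u)).
  assert (HL : 0 <= L) by (unfold L; apply Rplus_le_le_0_compat; apply Rmult_le_pos; nra).
  (* Cauchy-Schwarz, with equality defect [t (1 - t) (p u - q r)^2] *)
  assert (Hcs : L * L <= (t * R1 + (1 - t) * R2) * (t * H1 + (1 - t) * H2)).
  { rewrite <- H, <- H0, <- H3, <- H4. unfold L.
    assert (0 <= t * (1 - t) * (p * u - q * r) ^ 2)
      by (apply Rmult_le_pos; [nra|apply pow2_ge_0]).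
    nra. }
  rewrite <- sqrt_mult by nra. rewrite <- (sqrt_square L HL). apply sqrt_le_1_alt. exact Hcs.
Qed.

Lemma conv_obj_convex N P beta th1 th2 t : inDelta N P th1 -> inDelta N P th2 -> 0 <= t <= 1 ->
  conv_obj N P beta (mix t th1 th2) <= t * conv_obj N P beta th1 + (1 - t) * conv_obj N P beta th2.
Proof.
  intros H1 H2 Ht. rewrite !conv_obj_cross_logP, cross_logP_mix, Rfun_mix.
  pose proof (sqrt_mul_concave t (Rfun N beta th1) (Rfun N beta th2) (Hent N th1) (Hent N th2) Ht
    (Rfun_nonneg N P beta th1 H1) (Rfun_nonneg N P beta th2 H2)
    (Hent_nonneg N P th1 H1) (Hent_nonneg N P th2 H2)).
  assert (sqrt (t * Hent N th1 + (1 - t) * Hent N th2) <= sqrt (Hent N (mix t th1 th2)))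
    by (apply sqrt_le_1_alt, (Hent_concave N P); auto).
  pose proof (sqrt_pos (t * Rfun N beta th1 + (1 - t) * Rfun N beta th2)).
  nra.
Qed.

Lemma exists_pos_lower_bound n (f : nat -> R) :
  exists e, 0 < e /\ forall i, (i < n)%nat -> 0 < f i -> e <= f i.
Proof.
  induction n as [|n [e [He H]]]; [exists 1; split; [lra|intros; lia]|].
  destruct (Rlt_dec 0 (f n)) as [Hfn|Hfn].
  - exists (Rmin e (f n)). split; [apply Rmin_glb_lt; auto|]. intros i Hi Hf.
    destruct (Nat.eq_dec i n) as [->|]; [apply Rmin_r|].
    apply Rle_trans with e; [apply Rmin_l|apply H; auto; lia].
  - exists e. split; auto. intros i Hi Hf.
    destruct (Nat.eq_dec i n) as [->|]; [lra|apply H; auto; lia].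
Qed.

Lemma exists_pos_lower_bound2 n (f : nat -> nat -> R) :
  exists e, 0 < e /\ forall i j, (i < n)%nat -> (j < n)%nat -> 0 < f i j -> e <= f i j.
Proof.
  assert (Hrows : forall m, exists e, 0 < e /\
            forall i j, (i < m)%nat -> (j < n)%nat -> 0 < f i j -> e <= f i j).
  { induction m as [|m [e [He H]]]; [exists 1; split; [lra|intros; lia]|].
    destruct (exists_pos_lower_bound n (f m)) as [e' [He' H']].
    exists (Rmin e e'). split; [apply Rmin_glb_lt; auto|]. intros i j Hi Hj Hf.
    destruct (Nat.eq_dec i m) as [->|].
    - apply Rle_trans with e'; [apply Rmin_r|auto].
    - apply Rle_trans with e; [apply Rmin_l|apply H; auto; lia]. }
  apply Hrows.
Qed.

Section Segment.
Variables (N : nat) (P : nat -> nat -> R) (beta : nat -> R).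
Hypothesis hP : row_stochastic N P.

(* [mix (- e) th rh] lies on the line from [th] through [rh], just beyond [rh]. *)
Lemma inDelta_extend rh th : inDelta N P rh -> inDelta N P th ->
  (forall i j, (i < N)%nat -> (j < N)%nat -> 0 < P i j -> 0 < rh i j) ->
  exists e, 0 < e /\ inDelta N P (mix (- e) th rh).
Proof.
  intros Hrh Hth Hfull. destruct (exists_pos_lower_bound2 N rh) as [e [He Hmin]].
  exists e. split; [exact He|]. apply inDelta_affine; auto. intros i j Hi Hj. unfold mix.
  pose proof (proj1 Hrh i j Hi Hj). pose proof (proj1 Hth i j Hi Hj).
  destruct (Rlt_dec 0 (rh i j)) as [Hpos|Hz].
  - pose proof (Hmin i j Hi Hj Hpos). pose proof (inDelta_entry_le1 N P th i j Hth Hi Hj). nra.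
  - replace (rh i j) with 0 by lra.
    replace (th i j) with 0; [lra|].
    symmetry. apply (proj2 (proj2 (proj2 Hth))); auto.
Qed.

(* Along the segment from [th] (where [H > R]) through [rh] (where [H < R]), the concave function
   [H - R] vanishes somewhere; [Dkl] is convex, so it does not exceed [Dkl th] there. *)
Lemma exists_balanced_point rh th : inDelta N P rh -> inDelta N P th ->
  (forall i j, (i < N)%nat -> (j < N)%nat -> 0 < P i j -> 0 < rh i j) ->
  Hent N rh < Rfun N beta rh -> Rfun N beta th < Hent N th -> Dkl N rh P <= Dkl N th P ->
  exists th', inDelta N P th' /\ Hent N th' = Rfun N beta th' /\ Dkl N th' P <= Dkl N th P.
Proof.
  intros Hrh Hth Hfull Hrh_lt Hth_gt HD.
  destruct (inDelta_extend rh th Hrh Hth Hfull) as [e [He Hrh']].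
  set (mu := fun u => mix u th (mix (- e) th rh)).
  assert (Hmu : forall u, 0 <= u <= 1 -> inDelta N P (mu u)) by (intros; apply inDelta_mix; auto).
  assert (Hmu_mix : forall u, mu u = mix (u * (1 + e) - e) th rh).
  { intros u. unfold mu, mix. do 2 (apply functional_extensionality; intro). ring. }
  set (h := fun u => Hent N (mu u) - Rfun N beta (mu u)).
  set (u0 := e / (1 + e)).
  assert (Hu0 : 0 < u0 <= 1) by (unfold u0; split; [apply Rdiv_lt_0_compat|
    apply Rmult_le_reg_r with (1 + e); [|field_simplify]]; lra).
  assert (Hmu_u0 : mu u0 = rh).
  { rewrite Hmu_mix. replace (u0 * (1 + e) - e) with 0 by (unfold u0; field; lra).
    unfold mix. do 2 (apply functional_extensionality; intro). ring. }
  assert (Hmu_1 : mu 1 = th) by (unfold mu, mix; do 2 (apply functional_extensionality; intro); ring).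
  destruct (star_concave_root h u0) as [s [Hs Hhs]]; auto.
  - intros b l Hb Hl. unfold h.
    replace (mu (l * b)) with (mix l (mu b) (mu 0))
      by (unfold mu, mix; do 2 (apply functional_extensionality; intro); ring).
    rewrite Rfun_mix. pose proof (Hent_concave N P l (mu b) (mu 0) Hl (Hmu b Hb) (Hmu 0 ltac:(lra))).
    lra.
  - unfold h. rewrite Hmu_u0. lra.
  - unfold h. rewrite Hmu_1. lra.
  - exists (mu s). split; [apply Hmu; lra|]. split; [unfold h in Hhs; lra|].
    assert (Hlam : 0 <= s * (1 + e) - e <= 1).
    { assert (Hs0 : u0 * (1 + e) <= s * (1 + e)) by (apply Rmult_le_compat_r; lra).
      replace (u0 * (1 + e)) with e in Hs0 by (unfold u0; field; lra). nra. }
    rewrite Hmu_mix. pose proof (Dkl_convex N P _ th rh hP Hlam Hth Hrh). nra.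
Qed.

End Segment.

Lemma is_inf_exists (S : R -> Prop) :
  (exists x, S x) -> (exists l, forall x, S x -> l <= x) -> exists m, is_inf S m.
Proof.
  intros [x Hx] [l Hl]. set (E := fun y => S (- y)).
  destruct (completeness E) as [m [Hub Hlub]].
  { exists (- l). intros y Hy. specialize (Hl _ Hy). lra. }
  { exists (- x). unfold E. rewrite Ropp_involutive. exact Hx. }
  exists (- m). split.
  - intros z Hz. assert (E (- z)) by (unfold E; rewrite Ropp_involutive; exact Hz).
    specialize (Hub _ H). lra.
  - intros m' Hm'. enough (m <= - m') by lra.
    apply Hlub. intros y Hy. specialize (Hm' _ Hy). lra.
Qed.

Lemma is_inf_transfer (S T : R -> Prop) m :
  (forall x, S x -> exists y, T y /\ y <= x) -> (forall y, T y -> exists x, S x /\ x <= y) ->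
  is_inf S m -> is_inf T m.
Proof.
  intros HST HTS [Hlb Hglb]. split.
  - intros y Hy. destruct (HTS y Hy) as [x [Hx Hxy]]. specialize (Hlb x Hx). lra.
  - intros m' Hm'. apply Hglb. intros x Hx. destruct (HST x Hx) as [y [Hy Hyx]].
    specialize (Hm' y Hy). lra.
Qed.

Section Stationary.
Variables (N : nat) (P : nat -> nat -> R) (pi beta : nat -> R).
Hypothesis hP : row_stochastic N P.
Hypothesis hpi : stationary N P pi.

Definition flow : nat -> nat -> R := fun i j => pi i * P i j.

Lemma tbar_flow i : (i < N)%nat -> tbar N flow i = pi i.
Proof. intros Hi. unfold tbar, flow. rewrite sumR_scal, (proj2 hP) by exact Hi. ring. Qed.

Lemma flow_inDelta : inDelta N P flow.
Proof.
  destruct hP as [HPnn HProw], hpi as (Hpos & Hsum & Hstat). unfold flow.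
  split; [|split; [|split]].
  - intros i j Hi Hj. apply Rmult_le_pos; [left|]; auto.
  - rewrite <- Hsum. apply sumR_ext. intros i Hi. rewrite sumR_scal, HProw by exact Hi. ring.
  - intros i Hi. rewrite sumR_scal, HProw, Hstat by exact Hi. ring.
  - intros i j Hi Hj HP. replace (P i j) with 0 by (specialize (HPnn i j Hi Hj); lra). ring.
Qed.

Lemma flow_full_support i j : (i < N)%nat -> (j < N)%nat -> 0 < P i j -> 0 < flow i j.
Proof. intros Hi Hj HP. apply Rmult_lt_0_compat; [apply (proj1 hpi)|]; auto. Qed.

Lemma Dkl_flow : Dkl N flow P = 0.
Proof.
  rewrite <- (sumR_zero N). apply sumR_ext. intros i Hi.
  rewrite <- (sumR_zero N). apply sumR_ext. intros j Hj.
  rewrite tbar_flow by exact Hi. apply xlog_self.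
Qed.

Lemma Rfun_flow : Rfun N beta flow = sumR N (fun i => pi i * (beta i) ^ 2 / 2).
Proof. apply sumR_ext. intros i Hi. rewrite tbar_flow by exact Hi. reflexivity. Qed.

Lemma zeta_values_nonneg z : zeta_values N P beta z -> 0 <= z.
Proof.
  intros (th & xi & HD & _ & ->). pose proof (Dkl_nonneg N P th hP HD).
  pose proof (zeta_obj_ge_Dkl N P beta th xi). lra.
Qed.

Lemma conv_values_below_zeta_values z : Hent N flow < Rfun N beta flow ->
  zeta_values N P beta z -> exists w, conv_values N P beta w /\ w <= z.
Proof.
  intros Hflow (th & xi & HD & HJ & ->).
  destruct (Rle_dec (Hent N th) (Rfun N beta th)) as [Hle|Hgt].
  - exists (conv_obj N P beta th). split; [exists th; auto|].
    apply zeta_obj_ge_conv_obj; auto.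
  - destruct (exists_balanced_point N P beta hP flow th flow_inDelta HD flow_full_support
                Hflow ltac:(lra) ltac:(rewrite Dkl_flow; apply Dkl_nonneg; auto))
      as [th' (HD' & Hbal & HDkl)].
    exists (conv_obj N P beta th'). split; [exists th'; auto|].
    assert (conv_obj N P beta th' = Dkl N th' P) by (rewrite conv_obj_Dkl, Hbal by exact HD'; ring).
    pose proof (zeta_obj_ge_Dkl N P beta th xi). lra.
Qed.

End Stationary.

Theorem lemma10 (N : nat) (P : nat -> nat -> R) (pi beta : nat -> R)
  (hP : row_stochastic N P) (hirr : irreducible N P) (hap : aperiodic N P)
  (hpi : stationary N P pi) :
  (exists z, is_inf (zeta_values N P beta) z) /\
  forall zeta, is_inf (zeta_values N P beta) zeta ->
    (HP N P pi >= sumR N (fun i => pi i * (beta i) ^ 2 / 2) -> zeta = 0) /\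
    (~ (HP N P pi >= sumR N (fun i => pi i * (beta i) ^ 2 / 2)) ->
       is_inf (conv_values N P beta) zeta /\
       (forall th1 th2 t, inDelta N P th1 -> inDelta N P th2 -> 0 <= t <= 1 ->
          inDelta N P (mix t th1 th2) /\
          conv_obj N P beta (mix t th1 th2)
            <= t * conv_obj N P beta th1 + (1 - t) * conv_obj N P beta th2)).
Proof.
  assert (Hflow := flow_inDelta N P pi hP hpi).
  change (HP N P pi) with (Hent N (flow P pi)).
  rewrite <- (Rfun_flow N P pi beta hP).
  split.
  { apply is_inf_exists.
    - destruct (zeta_values_le_conv_obj N P beta _ Hflow) as [z [Hz _]]. exists z. exact Hz.
    - exists 0. apply zeta_values_nonneg; auto. }
  intros zeta Hzeta. split.
  - intros Hge.
    assert (H0 : zeta_values N P beta 0).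
    { pose proof (zeta_values_scaled_drift N P beta _ 1 Hflow ltac:(lra)) as Hz.
      rewrite Dkl_flow in Hz by auto. replace (0 + (1 - 1) ^ 2 * Rfun N beta (flow P pi)) with 0 in Hz
        by ring. exact Hz. }
    destruct Hzeta as [Hlb Hglb]. specialize (Hlb 0 H0).
    assert (0 <= zeta) by (apply Hglb; apply zeta_values_nonneg; auto). lra.
  - intros Hlt. split.
    + apply (is_inf_transfer (zeta_values N P beta)); [| |exact Hzeta].
      * intros z Hz. apply (conv_values_below_zeta_values N P pi); auto. lra.
      * intros w (th & HD & ->). apply zeta_values_le_conv_obj; exact HD.
    + intros th1 th2 t H1 H2 Ht. split.
      * apply inDelta_mix; auto.
      * apply conv_obj_convex; auto.
Qed.
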